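(* Let $X$ be a countably infinite set and $W=\mathbb R^X$. Then (1) the relation $\blacktriangleright$ on $W$ is a preorder satisfying Strong Pareto, Permutation Invariance, and Quasi-Independence; and (2) $\blacktriangleright$ weakly extends $\succeq_{SP}$ and is strictly larger than it: there exist $w,v\in W$ with $w\blacktriangleright v$ but not $w\succeq_{SP} v$.
   Context: Addition and scalar multiplication of worlds are pointwise. For a preorder $\succeq$, $w\succ v$ means $w\succeq v$ and not $v\succeq w$. For a permutation $\pi$ of $X$, $\pi(w)(x)=w(\pi(x))$. Strong Pareto: for all $w,v\in W$, if $w(x)\ge v(x)$ for all $x$ and $w(x)>v(x)$ for some $x$, then $w\succ v$. Permutation Invariance: for all $w,v\in W$ and every permutation $\pi$ of $X$, $w\succeq v$ iff $\pi(w)\succeq\pi(v)$. Quasi-Independence: for all $w,v,u\in W$, if $w\succeq v$ then for every $\alpha\in[0,1]$, $\alpha w+(1-\alpha)u\succeq \alpha v+(1-\alpha)u$. A series $\sum_{x\in X}a_x$ converges unconditionally (diverges unconditionally to $+\infty$) if it converges to the same value (diverges to $+\infty$) under every enumeration of $X$. Sum Preorder: $w\succeq_{SP} v$ iff $\sum_{x\in X}(w(x)-v(x))$ converges unconditionally to some $r\ge 0$ or diverges unconditionally to $+\infty$. Relation $\blacktriangleright$: $w\blacktriangleright v$ iff either (i) $w\succeq_{SP} v$, or (ii) all of: (a) not $w\succeq_{SP} v$; (b) there exist $c>0$ and an infinite $A\subseteq X$ with $w(x)-v(x)>c$ for all $x\in A$; (c) there do not exist $d>0$ and an infinite $B\subseteq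 X$ with $v(x)-w(x)>d$ for all $x\in B$. A relation $\succeq$ weakly extends $\succeq'$ if $w\succeq' v$ implies $w\succeq v$. *)

From Stdlib Require Import Reals List.
Open Scope R_scope.

Definition world (X : Type) := X -> R.

Definition bijection {A B : Type} (f : A -> B) : Prop :=
  exists g : B -> A, (forall a, g (f a) = a) /\ (forall b, f (g b) = b).

Definition enumeration {X : Type} (e : nat -> X) : Prop := bijection e.

Definition countably_infinite (X : Type) : Prop := exists e : nat -> X, enumeration e.

Definition psum {X : Type} (a : X -> R) (e : nat -> X) (n : nat) : R :=
  sum_f_R0 (fun k => a (e k)) n.

Definition uncond_conv {X : Type} (a : X -> R) (r : R) : Prop :=
  forall e : nat -> X, enumeration e -> Un_cv (psum a e) r.

Definition uncond_div_pinfty {X : Type} (a : X -> R) : Prop :=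
  forall e : nat -> X, enumeration e -> cv_infty (psum a e).

Definition sum_preorder {X : Type} (w v : world X) : Prop :=
  (exists r, r >= 0 /\ uncond_conv (fun x => w x - v x) r)
  \/ uncond_div_pinfty (fun x => w x - v x).

Definition infinite_set {X : Type} (A : X -> Prop) : Prop :=
  ~ exists l : list X, forall x, A x -> In x l.

Definition btri {X : Type} (w v : world X) : Prop :=
  sum_preorder w v \/
  ( ~ sum_preorder w v /\
    (exists c, c > 0 /\ exists A : X -> Prop,
        infinite_set A /\ forall x, A x -> w x - v x > c) /\
    ~ (exists d, d > 0 /\ exists B : X -> Prop,
        infinite_set B /\ forall x, B x -> v x - w x > d) ).

Definition strict {X : Type} (Rel : world X -> world X -> Prop) (w v : world X) : Prop :=
  Rel w v /\ ~ Rel v w.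

Definition is_preorder {X : Type} (Rel : world X -> world X -> Prop) : Prop :=
  (forall w, Rel w w) /\ (forall w v u, Rel w v -> Rel v u -> Rel w u).

Definition strong_pareto {X : Type} (Rel : world X -> world X -> Prop) : Prop :=
  forall w v : world X,
    (forall x, w x >= v x) -> (exists x, w x > v x) -> strict Rel w v.

Definition permute {X : Type} (pi : X -> X) (w : world X) : world X :=
  fun x => w (pi x).

Definition permutation_invariance {X : Type} (Rel : world X -> world X -> Prop) : Prop :=
  forall (w v : world X) (pi : X -> X), bijection pi ->
    (Rel w v <-> Rel (permute pi w) (permute pi v)).

Definition mix {X : Type} (alpha : R) (w u : world X) : world X :=
  fun x => alpha * w x + (1 - alpha) * u x.

Definition quasi_independence {X : Type} (Rel : world X -> world X -> Prop) : Prop :=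
  forall w v u : world X, Rel w v ->
    forall alpha, 0 <= alpha <= 1 -> Rel (mix alpha w u) (mix alpha v u).

Definition weakly_extends {X : Type} (Rel Rel' : world X -> world X -> Prop) : Prop :=
  forall w v, Rel' w v -> Rel w v.

From Stdlib Require Import Reals List Lra Lia.
From Stdlib Require Import Classical ClassicalEpsilon FunctionalExtensionality.
Open Scope R_scope.

(* Every property involved depends on [w] and [v] only through [D = w - v], so it suffices
   that the class of [D] whose sum is unconditionally [>= 0], or which is above some [c > 0]
   infinitely often and below no [-d < 0] infinitely often, is closed under addition, positive
   scaling and permutation.  The one non-trivial input is that a sum which is unconditionally
   [>= 0] cannot have infinitely many terms below [-d]: such terms could be spliced into an
   enumeration densely enough to drive its partial sums to [-oo].  The extension is strict: the
   difference [1, -1, 1, -1/2, -1/2, 1, -1/3, -1/3, -1/3, ...] has partial sums oscillating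
   between [0] and [1]. *)

Definition sum_ge0 {X : Type} (D : X -> R) : Prop :=
  (exists r, r >= 0 /\ uncond_conv D r) \/ uncond_div_pinfty D.

Definition frequently_pos {X : Type} (D : X -> R) : Prop :=
  exists c, c > 0 /\ exists A : X -> Prop, infinite_set A /\ forall x, A x -> D x > c.

Definition btri_diff {X : Type} (D : X -> R) : Prop :=
  sum_ge0 D \/ (~ sum_ge0 D /\ frequently_pos D /\ ~ frequently_pos (fun x => - D x)).

Lemma btriE {X : Type} (w v : world X) : btri w v <-> btri_diff (fun x => w x - v x).
Proof.
  assert (Hopp : forall x, - (w x - v x) = v x - w x) by (intros; ring).
  unfold btri, btri_diff, frequently_pos. setoid_rewrite Hopp. reflexivity.
Qed.

Lemma bijection_inv {A B : Type} (f : A -> B) : bijection f ->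
  exists g, bijection g /\ (forall a, g (f a) = a) /\ (forall b, f (g b) = b).
Proof. intros [g [H1 H2]]. exists g. split; [exists f; split |]; auto. Qed.

Lemma bijection_comp {A B C : Type} (f : A -> B) (h : B -> C) :
  bijection f -> bijection h -> bijection (fun a => h (f a)).
Proof.
  intros [g [H1 H2]] [k [K1 K2]]. exists (fun c => g (k c)).
  split; intros; [rewrite K1, H1 | rewrite H2, K2]; reflexivity.
Qed.

Lemma bijection_of_inj_surj {A B : Type} (f : A -> B) :
  (forall a1 a2, f a1 = f a2 -> a1 = a2) -> (forall b, exists a, f a = b) -> bijection f.
Proof.
  intros Hinj Hsurj. destruct (choice _ Hsurj) as [g Hg].
  exists g. split; auto.
Qed.

Lemma in_le_list_max (l : list nat) n : In n l -> (n <= list_max l)%nat.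
Proof.
  pose proof (proj1 (list_max_le l (list_max l)) (le_n _)) as H.
  rewrite Forall_forall in H. auto.
Qed.

Lemma infinite_set_iff_unbounded {X : Type} (e : nat -> X) (A : X -> Prop) :
  enumeration e ->
  infinite_set A <-> forall m, exists n, (m <= n)%nat /\ A (e n).
Proof.
  intros [g [Hge Heg]]. split.
  - intros HA m. apply NNPP. intros Hm. apply HA.
    exists (map e (seq 0 m)). intros x Hx. rewrite <- (Heg x). apply in_map, in_seq.
    destruct (Compare_dec.le_lt_dec m (g x)) as [Hle | Hlt]; [| lia].
    exfalso. apply Hm. exists (g x). rewrite Heg. auto.
  - intros Hunb [l Hl]. destruct (Hunb (S (list_max (map g l)))) as [n [Hn HA]].
    apply Hl, (in_map g) in HA. rewrite Hge in HA. apply in_le_list_max in HA. lia.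
Qed.

Lemma infinite_set_preimage {X : Type} (h : X -> X) (A : X -> Prop) : bijection h ->
  infinite_set A -> infinite_set (fun x => A (h x)).
Proof.
  intros [g [Hgh Hhg]] HA [l Hl]. apply HA. exists (map h l). intros x Hx.
  rewrite <- (Hhg x). apply in_map, Hl. rewrite Hhg. exact Hx.
Qed.

Lemma infinite_set_remove_list {X : Type} (A : X -> Prop) (l : list X) :
  infinite_set A -> infinite_set (fun x => A x /\ ~ In x l).
Proof.
  intros HA [l' Hl']. apply HA. exists (l' ++ l). intros x Hx. apply in_or_app.
  destruct (classic (In x l)); auto.
Qed.

Lemma infinite_set_union_split {X : Type} (A B : X -> Prop) (C : X -> Prop) :
  infinite_set C -> (forall x, C x -> A x \/ B x) ->
  infinite_set A \/ infinite_set B.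
Proof.
  intros HC HAB. apply NNPP. intros Hn. apply not_or_and in Hn as [HA HB].
  apply NNPP in HA as [lA HlA]. apply NNPP in HB as [lB HlB].
  apply HC. exists (lA ++ lB). intros x Hx. apply in_or_app.
  destruct (HAB x Hx); [left | right]; auto.
Qed.

Lemma frequently_pos_le {X : Type} (F G : X -> R) :
  (forall x, F x <= G x) -> frequently_pos F -> frequently_pos G.
Proof.
  intros HFG [c [Hc [A [HA HF]]]]. exists c. split; auto. exists A. split; auto.
  intros x Hx. specialize (HF x Hx). specialize (HFG x). lra.
Qed.

Lemma not_frequently_pos_add {X : Type} (F G : X -> R) :
  ~ frequently_pos F -> ~ frequently_pos G -> ~ frequently_pos (fun x => F x + G x).
Proof.
  intros HF HG [c [Hc [C [HC HFG]]]].
  destruct (infinite_set_union_split (fun x => C x /\ F x > c / 2)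
              (fun x => C x /\ G x > c / 2) C HC) as [HA | HB].
  - intros x Hx. specialize (HFG x Hx).
    destruct (Rlt_le_dec (c / 2) (F x)); [left | right]; split; auto; lra.
  - apply HF. exists (c / 2). split; [lra |]. exists (fun x => C x /\ F x > c / 2).
    split; auto. intros x [_ Hx]. exact Hx.
  - apply HG. exists (c / 2). split; [lra |]. exists (fun x => C x /\ G x > c / 2).
    split; auto. intros x [_ Hx]. exact Hx.
Qed.

Lemma frequently_pos_add {X : Type} (F G : X -> R) :
  ~ frequently_pos (fun x => - F x) -> frequently_pos G ->
  frequently_pos (fun x => F x + G x).
Proof.
  intros HF [c [Hc [A [HA HG]]]].
  assert (Hfin : ~ infinite_set (fun x => - F x > c / 2)).
  { intros Hinf. apply HF. exists (c / 2). split; [lra |]. eauto. }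
  apply NNPP in Hfin as [l Hl].
  exists (c / 2). split; [lra |]. exists (fun x => A x /\ ~ In x l). split.
  - apply infinite_set_remove_list; exact HA.
  - intros x [Hx Hnl]. specialize (HG x Hx).
    destruct (Rlt_le_dec (c / 2) (- F x)); [exfalso; auto | lra].
Qed.

Fixpoint lsum (b : nat -> R) (l : list nat) : R :=
  match l with nil => 0 | k :: l' => b k + lsum b l' end.

Lemma lsum_app b l1 l2 : lsum b (l1 ++ l2) = lsum b l1 + lsum b l2.
Proof. induction l1 as [| k l1 IH]; simpl; [| rewrite IH]; ring. Qed.

Lemma lsum_map b (h : nat -> nat) l : lsum b (map h l) = lsum (fun k => b (h k)) l.
Proof. induction l as [| k l IH]; simpl; [| rewrite IH]; reflexivity. Qed.

Lemma lsum_seq_S b n : lsum b (seq 0 (S n)) = lsum b (seq 0 n) + b n.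
Proof. rewrite seq_S, lsum_app. simpl. ring. Qed.

Lemma sum_f_R0_lsum b n : sum_f_R0 b n = lsum b (seq 0 (S n)).
Proof. induction n as [| n IH]; [simpl; ring |]. rewrite lsum_seq_S, <- IH. reflexivity. Qed.

Lemma lsum_ge0 b l : (forall k, 0 <= b k) -> 0 <= lsum b l.
Proof. intros Hb. induction l as [| k l IH]; simpl; [lra |]. specialize (Hb k). lra. Qed.

Lemma lsum_le_incl b l l' : (forall k, 0 <= b k) -> NoDup l -> incl l l' ->
  lsum b l <= lsum b l'.
Proof.
  revert l'. induction l as [| k l IH]; intros l' Hb Hnd Hincl; [apply lsum_ge0; auto |].
  destruct (in_split k l') as [l1 [l2 ->]]; [apply Hincl; left; auto |].
  apply NoDup_cons_iff in Hnd as [Hk Hnd].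
  assert (Hle : lsum b l <= lsum b (l1 ++ l2)).
  { apply IH; auto. intros x Hx.
    assert (Hx' : In x (l1 ++ k :: l2)) by (apply Hincl; right; auto).
    apply in_app_or in Hx' as [? | [-> | ?]]; apply in_or_app; auto; contradiction. }
  rewrite lsum_app in *. simpl. lra.
Qed.

Lemma Un_cv_le_eventually u l M N :
  Un_cv u l -> (forall n, (N <= n)%nat -> u n <= M) -> l <= M.
Proof.
  intros Hu Hb. apply Rnot_lt_le. intros Hl. destruct (Hu (l - M)) as [N' HN']; [lra |].
  specialize (HN' (N + N')%nat ltac:(lia)). specialize (Hb (N + N')%nat ltac:(lia)).
  unfold Rdist in HN'. apply Rabs_def2 in HN'. lra.
Qed.

Lemma Un_cv_bounded_below u l : Un_cv u l -> exists M, forall n, M <= u n.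
Proof.
  intros Hu. destruct (maj_by_pos u (exist _ l Hu)) as [M [_ HM]].
  exists (- M). intros n. specialize (HM n).
  pose proof (Rle_abs (- u n)) as H. rewrite Rabs_Ropp in H. lra.
Qed.

Lemma Un_cv_scale u l c : Un_cv u l -> Un_cv (fun n => c * u n) (c * l).
Proof.
  intros Hu. apply (CV_mult (fun _ => c)); auto.
  intros eps Heps. exists 0%nat. intros n _. unfold Rdist. rewrite Rminus_diag, Rabs_R0. lra.
Qed.

Lemma psum_scale {X : Type} (D : X -> R) c e n :
  psum (fun x => c * D x) e n = c * psum D e n.
Proof. unfold psum. induction n as [| n IH]; simpl; [| rewrite IH]; ring. Qed.

Lemma psum_add {X : Type} (D1 D2 : X -> R) e n :
  psum (fun x => D1 x + D2 x) e n = psum D1 e n + psum D2 e n.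
Proof. apply sum_plus. Qed.

Lemma psum_nonneg_dominated {X : Type} (D : X -> R) e1 e2 :
  (forall x, 0 <= D x) -> enumeration e1 -> enumeration e2 ->
  forall n, exists N, psum D e1 n <= psum D e2 N.
Proof.
  intros HD [g1 [H1e H1g]] [g2 [H2e H2g]] n.
  set (l := map (fun k => g2 (e1 k)) (seq 0 (S n))).
  exists (list_max l). unfold psum. rewrite !sum_f_R0_lsum.
  replace (lsum (fun k => D (e1 k)) (seq 0 (S n))) with (lsum (fun j => D (e2 j)) l).
  2: { unfold l. rewrite lsum_map. f_equal. apply functional_extensionality.
       intros k. rewrite H2g. reflexivity. }
  apply lsum_le_incl; auto.
  - apply NoDup_map_NoDup_ForallPairs; [| apply seq_NoDup].
    intros x y _ _ E. apply (f_equal e2) in E. rewrite !H2g in E.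
    apply (f_equal g1) in E. rewrite !H1e in E. exact E.
  - intros x Hx. apply in_seq. apply in_le_list_max in Hx. lia.
Qed.

Lemma psum_nonneg_growing {X : Type} (D : X -> R) e :
  (forall x, 0 <= D x) -> Un_growing (psum D e).
Proof. intros HD n. unfold psum. simpl. specialize (HD (e (S n))). lra. Qed.

Lemma sum_ge0_nonneg {X : Type} (D : X -> R) :
  countably_infinite X -> (forall x, 0 <= D x) -> sum_ge0 D.
Proof.
  intros [e He] HD.
  pose proof (fun e' n He' => psum_nonneg_dominated D e' e HD He' He n) as Hdom_to_e.
  pose proof (fun e' n He' => psum_nonneg_dominated D e e' HD He He' n) as Hdom_from_e.
  destruct (classic (has_ub (psum D e))) as [Hub | Hunb].
  - destruct (growing_cv _ (psum_nonneg_growing D e HD) Hub) as [r Hr].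
    pose proof (growing_ineq _ _ (psum_nonneg_growing D e HD) Hr) as Hle_r.
    left. exists r. split.
    { specialize (Hle_r 0%nat). unfold psum in Hle_r. simpl in Hle_r.
      specialize (HD (e 0%nat)). lra. }
    intros e' He'.
    assert (Hle' : forall n, psum D e' n <= r).
    { intros n. destruct (Hdom_to_e e' n He') as [N HN]. specialize (Hle_r N). lra. }
    destruct (growing_cv (psum D e') (psum_nonneg_growing D e' HD)) as [r' Hr'].
    { exists r. intros x [i ->]. auto. }
    replace r with r'; auto. apply Rle_antisym.
    + apply (Un_cv_le_eventually _ _ _ 0 Hr'). auto.
    + apply (Un_cv_le_eventually _ _ _ 0 Hr). intros n _.
      destruct (Hdom_from_e e' n He') as [N HN].
      pose proof (growing_ineq _ _ (psum_nonneg_growing D e' HD) Hr' N). lra.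
  - right. intros e' He' M.
    assert (HN : exists N, M < psum D e' N).
    { apply NNPP. intros Hn. apply Hunb. exists M. intros x [i ->].
      destruct (Hdom_from_e e' i He') as [N HN]. apply Rnot_lt_le. intros Hc.
      apply Hn. exists N. lra. }
    destruct HN as [N HN]. exists N. intros n Hn.
    pose proof (tech9 _ (psum_nonneg_growing D e' HD) N n Hn). lra.
Qed.

Lemma sum_ge0_scale {X : Type} (D : X -> R) c : c > 0 -> sum_ge0 D -> sum_ge0 (fun x => c * D x).
Proof.
  intros Hc [[r [Hr Hconv]] | Hdiv].
  - left. exists (c * r). split; [apply Rle_ge, Rmult_le_pos; lra |].
    intros e He. apply (Un_cv_ext (fun n => c * psum D e n)).
    + intros n. rewrite psum_scale. reflexivity.
    + apply Un_cv_scale, Hconv, He.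
  - right. intros e He M. destruct (Hdiv e He (M / c)) as [N HN].
    exists N. intros n Hn. rewrite psum_scale. specialize (HN n Hn).
    apply (Rmult_lt_compat_l c) in HN; auto.
    replace (c * (M / c)) with M in HN by (field; lra). exact HN.
Qed.

Lemma sum_ge0_unscale {X : Type} (D : X -> R) c : c > 0 -> sum_ge0 (fun x => c * D x) -> sum_ge0 D.
Proof.
  intros Hc H. apply (sum_ge0_scale _ (/ c)) in H; [| apply Rlt_gt, Rinv_0_lt_compat; lra].
  replace D with (fun x => / c * (c * D x)); auto.
  apply functional_extensionality. intros x. field. lra.
Qed.

Lemma sum_ge0_add {X : Type} (D1 D2 : X -> R) :
  sum_ge0 D1 -> sum_ge0 D2 -> sum_ge0 (fun x => D1 x + D2 x).
Proof.
  assert (Hdiv : forall u v, (exists m, forall n, m <= u n) -> cv_infty v ->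
                   cv_infty (fun n => u n + v n)).
  { intros u v [m Hm] Hv M. destruct (Hv (M - m)) as [N HN]. exists N. intros n Hn.
    specialize (HN n Hn). specialize (Hm n). lra. }
  intros [[r1 [Hr1 H1]] | H1] [[r2 [Hr2 H2]] | H2].
  - left. exists (r1 + r2). split; [lra |]. intros e He.
    apply (Un_cv_ext (fun n => psum D1 e n + psum D2 e n)).
    + intros n. rewrite psum_add. reflexivity.
    + apply CV_plus; auto.
  - right. intros e He M.
    destruct (Hdiv _ _ (Un_cv_bounded_below _ _ (H1 e He)) (H2 e He) M) as [N HN].
    exists N. intros n Hn. rewrite psum_add. auto.
  - right. intros e He M.
    destruct (Hdiv _ _ (Un_cv_bounded_below _ _ (H2 e He)) (H1 e He) M) as [N HN].
    exists N. intros n Hn. rewrite psum_add. specialize (HN n Hn). lra.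
  - right. intros e He M. destruct (H1 e He (M / 2)) as [N1 HN1].
    destruct (H2 e He (M / 2)) as [N2 HN2]. exists (N1 + N2)%nat. intros n Hn.
    rewrite psum_add. specialize (HN1 n ltac:(lia)). specialize (HN2 n ltac:(lia)). lra.
Qed.

Lemma sum_ge0_perm {X : Type} (D : X -> R) (p : X -> X) :
  bijection p -> sum_ge0 D -> sum_ge0 (fun x => D (p x)).
Proof.
  intros Hp [[r [Hr Hconv]] | Hdiv]; [left; exists r; split; auto | right];
    intros e He; [apply (Hconv (fun n => p (e n))) | apply (Hdiv (fun n => p (e n)))];
    apply bijection_comp; auto.
Qed.

Lemma sum_ge0_unperm {X : Type} (D : X -> R) (p : X -> X) :
  bijection p -> sum_ge0 (fun x => D (p x)) -> sum_ge0 D.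
Proof.
  intros Hp H. destruct (bijection_inv p Hp) as [g [Hg [_ Hpg]]].
  apply (sum_ge0_perm _ g Hg) in H.
  replace D with (fun x => D (p (g x))); auto.
  apply functional_extensionality. intros x. rewrite Hpg. reflexivity.
Qed.

Lemma sum_f_R0_nonpos_le_term (h : nat -> R) n j :
  (forall k, h k <= 0) -> (j <= n)%nat -> sum_f_R0 h n <= h j.
Proof.
  intros Hh Hjn.
  assert (Hle0 : forall m, sum_f_R0 h m <= 0).
  { induction m as [| m IH]; simpl; [| specialize (Hh (S m))]; auto; lra. }
  induction n as [| n IH]; simpl.
  - replace j with 0%nat by lia. lra.
  - specialize (Hh (S n)). specialize (Hle0 n).
    destruct (Nat.eq_dec j (S n)) as [-> | Hne]; [| specialize (IH ltac:(lia))]; lra.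
Qed.

Lemma strictly_increasing_inj (s : nat -> nat) :
  (forall k l, (k < l)%nat -> (s k < s l)%nat) -> forall k l, s k = s l -> k = l.
Proof.
  intros Hs k l E. destruct (Nat.lt_total k l) as [H | [H | H]]; auto; apply Hs in H; lia.
Qed.

Lemma strictly_increasing_ge (s : nat -> nat) :
  (forall k l, (k < l)%nat -> (s k < s l)%nat) -> forall k, (k <= s k)%nat.
Proof. intros Hs k. induction k as [| k IH]; [lia |]. specialize (Hs k (S k)). lia. Qed.

Lemma increasing_enumeration (P : nat -> Prop) :
  (forall m, exists n, (m <= n)%nat /\ P n) ->
  exists s : nat -> nat, (forall k, P (s k)) /\
    (forall k l, (k < l)%nat -> (s k < s l)%nat) /\ (forall n, P n -> exists k, s k = n).
Proof.
  intros HP.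
  assert (Hnext : forall m, exists n, ((m <= n)%nat /\ P n) /\
                    forall k, (m <= k)%nat -> P k -> (n <= k)%nat).
  { intros m. destruct (Wf_nat.dec_inh_nat_subset_has_unique_least_element
                          (fun n => (m <= n)%nat /\ P n)) as [n [[Hn Hmin] _]].
    - intros n. apply classic.
    - apply HP.
    - exists n. split; auto. }
  destruct (choice _ Hnext) as [next Hspec].
  pose (s := fix s k := match k with O => next O | S k => next (S (s k)) end).
  assert (Hs0 : s O = next O) by reflexivity.
  assert (HsS : forall k, s (S k) = next (S (s k))) by reflexivity.
  assert (Hstep : forall k, (s k < s (S k))%nat).
  { intros k. rewrite HsS. destruct (Hspec (S (s k))) as [[H _] _]. lia. }
  assert (Hmono : forall k l, (k < l)%nat -> (s k < s l)%nat).
  { intros k l Hkl. induction Hkl as [| l _ IH]; [apply Hstep |].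
    specialize (Hstep l). lia. }
  exists s. split; [| split; auto].
  - intros [| k]; [rewrite Hs0 | rewrite HsS]; apply (proj2 (proj1 (Hspec _))).
  - assert (Hcover : forall k n, P n -> (n <= s k)%nat -> exists j, s j = n).
    { induction k as [| k IH]; intros n Hn Hk.
      + exists O. apply Nat.le_antisymm; auto. rewrite Hs0. apply (proj2 (Hspec _)); auto; lia.
      + destruct (Compare_dec.le_lt_dec n (s k)) as [Hle | Hlt]; [apply IH; auto |].
        exists (S k). apply Nat.le_antisymm; auto. rewrite HsS. apply (proj2 (Hspec _)); auto. }
    intros n Hn. apply (Hcover n); auto. apply strictly_increasing_ge; auto.
Qed.

Section Interleave.

Variable f : nat -> nat.
Hypothesis f_pos : forall t, (1 <= f t)%nat.

Fixpoint cumul (i : nat) : nat := match i with O => O | S i' => cumul i' + f i' end.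

(* [taken n = (i, j)]: the first [n] terms of the interleaving consist of [i] Q-terms and
   [j] B-terms.  Each Q-term [t] is followed by a run of [f t] B-terms. *)
Fixpoint taken (n : nat) : nat * nat :=
  match n with
  | O => (O, O)
  | S m => let (i, j) := taken m in if Nat.leb (cumul i) j then (S i, j) else (i, S j)
  end.

Lemma cumul_mono i k : (i <= k)%nat -> (cumul i <= cumul k)%nat.
Proof. intros H. induction H as [| k _ IH]; simpl; lia. Qed.

Lemma taken_inv n :
  let (i, j) := taken n in
  (i + j = n)%nat /\ (j <= cumul i)%nat /\ (i = O \/ (cumul (pred i) <= j)%nat).
Proof.
  induction n as [| n IH]; simpl; [lia |]. destruct (taken n) as [i j].
  destruct (Nat.leb (cumul i) j) eqn:E; simpl.
  - apply Nat.leb_le in E. pose proof (f_pos i). lia.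
  - apply Nat.leb_gt in E. lia.
Qed.

Lemma taken_B_run k : forall n i j, taken n = (i, j) -> (j + k <= cumul i)%nat ->
  taken (n + k) = (i, j + k)%nat.
Proof.
  induction k as [| k IH]; intros n i j H Hk; [rewrite !Nat.add_0_r; exact H |].
  assert (HS : taken (S n) = (i, S j)).
  { simpl. rewrite H. destruct (Nat.leb (cumul i) j) eqn:E; auto.
    apply Nat.leb_le in E. lia. }
  replace (n + S k)%nat with (S n + k)%nat by lia.
  replace (j + S k)%nat with (S j + k)%nat by lia. apply IH; auto. lia.
Qed.

Lemma taken_round i : taken (i + cumul i) = (i, cumul i).
Proof.
  induction i as [| i IH]; auto.
  assert (HQ : taken (S (i + cumul i)) = (S i, cumul i)).
  { simpl. rewrite IH, Nat.leb_refl. reflexivity. }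
  replace (S i + cumul (S i))%nat with (S (i + cumul i) + f i)%nat by (simpl; lia).
  apply (taken_B_run (f i)) in HQ; [exact HQ | simpl; lia].
Qed.

Lemma taken_B_reached j : exists n i, taken n = (i, j) /\ (j < cumul i)%nat.
Proof.
  induction j as [| j [n [i [H Hj]]]].
  - exists 1%nat, 1%nat. split; auto. simpl. pose proof (f_pos 0). lia.
  - assert (HS : taken (S n) = (i, S j)).
    { simpl. rewrite H. destruct (Nat.leb (cumul i) j) eqn:E; auto.
      apply Nat.leb_le in E. lia. }
    destruct (Nat.eq_dec (S j) (cumul i)) as [Hend | Hmid].
    + exists (S (S n)), (S i). split.
      * remember (S n) as n'. simpl. rewrite HS, Hend, Nat.leb_refl. reflexivity.
      * simpl. pose proof (f_pos i). lia.
    + exists (S n), i. split; auto. lia.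
Qed.

Lemma taken_inj n m : taken n = taken m -> n = m.
Proof.
  intros H. pose proof (taken_inv n) as Hn. pose proof (taken_inv m) as Hm.
  rewrite H in Hn. destruct (taken m). lia.
Qed.

Variables sQ sB : nat -> nat.
Hypothesis sQ_inj : forall a b, sQ a = sQ b -> a = b.
Hypothesis sB_inj : forall a b, sB a = sB b -> a = b.
Hypothesis sQ_sB_disjoint : forall a b, sQ a <> sB b.
Hypothesis sQ_sB_cover : forall m, (exists i, sQ i = m) \/ (exists j, sB j = m).

Definition interleave (n : nat) : nat :=
  let (i, j) := taken n in if Nat.leb (cumul i) j then sQ i else sB j.

Lemma interleave_bijection : bijection interleave.
Proof.
  apply bijection_of_inj_surj.
  - intros n m H. apply taken_inj. unfold interleave in H.
    pose proof (taken_inv n) as Hn. pose proof (taken_inv m) as Hm.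
    destruct (taken n) as [i j], (taken m) as [i' j'].
    destruct (Nat.leb (cumul i) j) eqn:E1, (Nat.leb (cumul i') j') eqn:E2;
      try solve [exfalso; eapply sQ_sB_disjoint; eauto].
    + apply sQ_inj in H. subst. apply Nat.leb_le in E1, E2. f_equal. lia.
    + apply sB_inj in H. subst. apply Nat.leb_gt in E1, E2. f_equal.
      destruct (Nat.lt_total i i') as [h | [h | h]]; auto; exfalso.
      * pose proof (cumul_mono i (pred i') ltac:(lia)). lia.
      * pose proof (cumul_mono i' (pred i) ltac:(lia)). lia.
  - intros m. destruct (sQ_sB_cover m) as [[i <-] | [j <-]].
    + exists (i + cumul i)%nat. unfold interleave. rewrite taken_round, Nat.leb_refl. auto.
    + destruct (taken_B_reached j) as [n [i [H Hj]]]. exists n. unfold interleave. rewrite H.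
      destruct (Nat.leb (cumul i) j) eqn:E; auto. apply Nat.leb_le in E. lia.
Qed.

Lemma lsum_interleave (a : nat -> R) n :
  lsum (fun k => a (interleave k)) (seq 0 n) =
  lsum (fun t => a (sQ t)) (seq 0 (fst (taken n))) +
  lsum (fun u => a (sB u)) (seq 0 (snd (taken n))).
Proof.
  induction n as [| n IH]; [simpl; ring |].
  rewrite lsum_seq_S, IH. unfold interleave. simpl taken.
  destruct (taken n) as [i j]. simpl.
  destruct (Nat.leb (cumul i) j); cbn [fst snd]; rewrite lsum_seq_S; ring.
Qed.

End Interleave.

(* The terms below [-eps] are split into two infinite families: [sB] lists every other one,
   [sQ] lists everything else.  Each [sQ]-term is followed by enough [sB]-terms to lower
   the running sum by at least [eps] per round. *)
Lemma rearrangement_unbounded_below (a : nat -> R) eps : eps > 0 ->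
  (forall m, exists n, (m <= n)%nat /\ a n < - eps) ->
  exists sigma : nat -> nat, bijection sigma /\
    forall M N, exists n, (N <= n)%nat /\ sum_f_R0 (fun k => a (sigma k)) n < M.
Proof.
  intros Heps Hneg.
  destruct (increasing_enumeration _ Hneg) as [s [Hs_neg [Hs_mono _]]].
  pose proof (strictly_increasing_inj s Hs_mono) as Hs_inj.
  set (sB k := s (2 * k)%nat).
  set (inB n := exists k, sB k = n).
  destruct (increasing_enumeration (fun n => ~ inB n)) as [sQ [HQ_notB [HQ_mono HQ_surj]]].
  { intros m. exists (s (2 * m + 1)%nat). split.
    - pose proof (strictly_increasing_ge s Hs_mono (2 * m + 1)). lia.
    - intros [k Hk]. apply Hs_inj in Hk. lia. }
  assert (Hf : exists f : nat -> nat,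
             forall t, (1 <= f t)%nat /\ a (sQ t) - eps * INR (f t) <= - eps).
  { apply (choice (fun t n => (1 <= n)%nat /\ a (sQ t) - eps * INR n <= - eps)).
    intros t. destruct (INR_archimed eps (a (sQ t))) as [c Hc]; auto.
    exists (S c). rewrite S_INR. split; [lia | lra]. }
  destruct Hf as [f Hf].
  assert (f_pos : forall t, (1 <= f t)%nat) by (intros t; apply Hf).
  exists (interleave f sQ sB). split.
  { apply interleave_bijection; auto.
    - apply strictly_increasing_inj; auto.
    - intros k l H. apply Hs_inj in H. lia.
    - intros k l H. apply (HQ_notB k). exists l. auto.
    - intros m. destruct (classic (inB m)) as [[k Hk] | HnB]; [right | left]; eauto. }
  assert (HB_sum : forall J, lsum (fun u => a (sB u)) (seq 0 J) <= - eps * INR J).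
  { induction J as [| J IH]; [simpl; lra |]. rewrite lsum_seq_S, S_INR.
    pose proof (Hs_neg (2 * J)%nat : a (sB J) < - eps). lra. }
  assert (HQ_sum : forall i,
             lsum (fun t => a (sQ t)) (seq 0 i) - eps * INR (cumul f i) <= - eps * INR i).
  { induction i as [| i IH]; [simpl; lra |]. rewrite lsum_seq_S. simpl cumul.
    rewrite plus_INR, S_INR. specialize (Hf i). lra. }
  assert (Hround : forall i, sum_f_R0 (fun k => a (interleave f sQ sB k)) (i + cumul f (S i))
                             <= - eps * INR (S i)).
  { intros i. rewrite sum_f_R0_lsum, <- Nat.add_succ_l, lsum_interleave, taken_round; auto.
    specialize (HB_sum (cumul f (S i))). specialize (HQ_sum (S i)). cbn [fst snd]. lra. }
  intros M N. destruct (INR_archimed eps (- M)) as [K HK]; auto.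
  exists (N + K + cumul f (S (N + K)))%nat. split; [lia |].
  specialize (Hround (N + K)%nat). pose proof (le_INR K (S (N + K)) ltac:(lia)). nra.
Qed.

Lemma sum_ge0_not_frequently_neg {X : Type} (D : X -> R) :
  countably_infinite X -> sum_ge0 D -> ~ frequently_pos (fun x => - D x).
Proof.
  intros [e He] Hsum [d [Hd [B [HB HBd]]]].
  assert (Hoften : forall m, exists n, (m <= n)%nat /\ D (e n) < - d).
  { intros m. destruct (proj1 (infinite_set_iff_unbounded e B He) HB m) as [n [Hn HBn]].
    exists n. split; auto. specialize (HBd _ HBn). lra. }
  destruct (rearrangement_unbounded_below _ d Hd Hoften) as [sigma [Hsigma Hlow]].
  assert (He' : enumeration (fun k => e (sigma k))) by (apply bijection_comp; auto).
  destruct Hsum as [[r [_ Hconv]] | Hdiv].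
  - destruct (Un_cv_bounded_below _ _ (Hconv _ He')) as [M HM].
    destruct (Hlow M 0%nat) as [n [_ Hn]]. specialize (HM n). unfold psum in HM. lra.
  - destruct (Hdiv _ He' 0) as [N HN]. destruct (Hlow 0 N) as [n [Hn Hn0]].
    specialize (HN n Hn). unfold psum in HN. lra.
Qed.

Lemma btri_diff_add {X : Type} (D1 D2 : X -> R) : countably_infinite X ->
  btri_diff D1 -> btri_diff D2 -> btri_diff (fun x => D1 x + D2 x).
Proof.
  intros HX B1 B2.
  assert (Hneg : forall D : X -> R, btri_diff D -> ~ frequently_pos (fun x => - D x)).
  { intros D [HD | [_ [_ HD]]]; auto. apply sum_ge0_not_frequently_neg; auto. }
  pose proof (Hneg _ B1) as N1. pose proof (Hneg _ B2) as N2.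
  destruct (classic (sum_ge0 (fun x => D1 x + D2 x))) as [Hs | Hns]; [left; exact Hs | right].
  split; [exact Hns | split].
  - destruct B1 as [S1 | [_ [P1 _]]]; [destruct B2 as [S2 | [_ [P2 _]]] |].
    + exfalso. apply Hns, sum_ge0_add; auto.
    + apply frequently_pos_add; auto.
    + apply (frequently_pos_le (fun x => D2 x + D1 x)); [intros x; lra |].
      apply frequently_pos_add; auto.
  - intros H. apply (not_frequently_pos_add _ _ N1 N2).
    revert H. apply frequently_pos_le. intros x. lra.
Qed.

Lemma btri_diff_scale {X : Type} (D : X -> R) c : c > 0 ->
  btri_diff D -> btri_diff (fun x => c * D x).
Proof.
  intros Hc [HS | [HNS [HP HN]]]; [left; apply sum_ge0_scale; auto | right].
  split; [| split].
  - intros H. apply HNS. eapply sum_ge0_unscale; eauto.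
  - destruct HP as [a [Ha [A [HA H]]]]. exists (c * a). split; [apply Rmult_lt_0_compat; lra |].
    exists A. split; auto. intros x Hx. specialize (H x Hx). apply Rmult_lt_compat_l; lra.
  - intros [d [Hd [B [HB H]]]]. apply HN. exists (d / c).
    split; [apply Rlt_gt, Rdiv_lt_0_compat; lra |]. exists B. split; auto. intros x Hx.
    specialize (H x Hx). apply (Rmult_lt_reg_l c); [lra |].
    replace (c * (d / c)) with d by (field; lra). lra.
Qed.

Lemma btri_diff_perm {X : Type} (D : X -> R) (p : X -> X) : bijection p ->
  btri_diff D -> btri_diff (fun x => D (p x)).
Proof.
  intros Hp [HS | [HNS [HP HN]]]; [left; apply sum_ge0_perm; auto | right].
  destruct (bijection_inv p Hp) as [g [Hg [_ Hpg]]].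
  split; [| split].
  - intros H. apply HNS. exact (sum_ge0_unperm D p Hp H).
  - destruct HP as [c [Hc [A [HA H]]]]. exists c. split; auto.
    exists (fun x => A (p x)). split; [apply infinite_set_preimage; auto | intros x Hx; apply H; exact Hx].
  - intros [d [Hd [B [HB H]]]]. apply HN. exists d. split; auto.
    exists (fun x => B (g x)). split; [apply infinite_set_preimage; auto |].
    intros x Hx. specialize (H _ Hx). rewrite Hpg in H. exact H.
Qed.

Lemma not_btri_diff_nonpos {X : Type} (D : X -> R) x0 : countably_infinite X ->
  (forall x, D x <= 0) -> D x0 < 0 -> ~ btri_diff D.
Proof.
  intros [e He] HD Hx0 [HS | [_ [[c [Hc [A [HA HAc]]]] _]]].
  - destruct He as [g [Hge Heg]].
    assert (Hle : forall n, (g x0 <= n)%nat -> psum D e n <= D x0).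
    { intros n Hn. rewrite <- (Heg x0).
      apply (sum_f_R0_nonpos_le_term (fun k => D (e k))); auto. }
    destruct HS as [[r [Hr Hconv]] | Hdiv].
    + pose proof (Un_cv_le_eventually _ _ _ _ (Hconv e (ex_intro _ g (conj Hge Heg))) Hle).
      lra.
    + destruct (Hdiv e (ex_intro _ g (conj Hge Heg)) 0) as [N HN].
      specialize (HN (N + g x0)%nat ltac:(lia)). specialize (Hle (N + g x0)%nat ltac:(lia)).
      lra.
  - apply HA. exists nil. intros x Hx. specialize (HAc x Hx). specialize (HD x). lra.
Qed.

(* Block [k >= 1] is the entry [1] followed by [k] entries [-1/k]; [block_pos n = (k, j)]
   says that position [n] is entry [j] of block [k]. *)
Fixpoint block_pos (n : nat) : nat * nat :=
  match n with
  | O => (1, 0)%nat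
  | S m => let (k, j) := block_pos m in if Nat.ltb j k then (k, S j) else (S k, O)
  end.

Definition block_seq (n : nat) : R :=
  let (k, j) := block_pos n in if Nat.eqb j 0 then 1 else - / INR k.

Lemma block_pos_inv n :
  let (k, j) := block_pos n in (1 <= k)%nat /\ (j <= k)%nat /\ (n + (k - j) <= k * k)%nat.
Proof.
  induction n as [| n IH]; simpl; [lia |]. destruct (block_pos n) as [k j].
  destruct (Nat.ltb j k) eqn:E; [apply Nat.ltb_lt in E | apply Nat.ltb_ge in E]; nia.
Qed.

Lemma block_sum n :
  sum_f_R0 block_seq n = 1 - INR (snd (block_pos n)) / INR (fst (block_pos n)).
Proof.
  induction n as [| n IH]; [unfold block_seq; simpl; field |].
  simpl sum_f_R0. rewrite IH. pose proof (block_pos_inv n) as Hinv. unfold block_seq. simpl.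
  destruct (block_pos n) as [k j]. destruct Hinv as [Hk [Hjk _]]. cbn [fst snd].
  assert (INR k > 0) by (apply lt_0_INR; lia).
  destruct (Nat.ltb j k) eqn:E; cbn [fst snd Nat.eqb]; rewrite S_INR.
  - field. lra.
  - apply Nat.ltb_ge in E. replace j with k by lia. simpl. field. lra.
Qed.

Lemma block_sum_le_1 n : sum_f_R0 block_seq n <= 1.
Proof.
  rewrite block_sum. pose proof (block_pos_inv n) as Hinv. destruct (block_pos n) as [k j].
  destruct Hinv as [Hk _]. cbn [fst snd].
  assert (INR k > 0) by (apply lt_0_INR; lia). pose proof (pos_INR j).
  assert (0 <= INR j / INR k) by (apply Rmult_le_pos; [| apply Rlt_le, Rinv_0_lt_compat]; lra). lra.
Qed.

Lemma block_pos_next_block t : forall n k j, block_pos n = (k, j) -> (j + t = k)%nat ->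
  block_pos (n + S t) = (S k, O).
Proof.
  induction t as [| t IH]; intros n k j H E.
  - rewrite Nat.add_1_r. simpl. rewrite H.
    destruct (Nat.ltb j k) eqn:E'; auto. apply Nat.ltb_lt in E'. lia.
  - assert (HS : block_pos (S n) = (k, S j)).
    { simpl. rewrite H. destruct (Nat.ltb j k) eqn:E'; auto. apply Nat.ltb_ge in E'. lia. }
    replace (n + S (S t))%nat with (S n + S t)%nat by lia. apply (IH _ _ _ HS). lia.
Qed.

Lemma block_seq_one_often m : exists n, (m <= n)%nat /\ block_seq n = 1.
Proof.
  pose proof (block_pos_inv m) as Hinv. destruct (block_pos m) as [k j] eqn:E.
  exists (m + S (k - j))%nat. split; [lia |]. unfold block_seq.
  rewrite (block_pos_next_block (k - j) m k j E); [reflexivity | lia].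
Qed.

Lemma block_seq_eventually_ge d : d > 0 -> exists N, forall n, (N <= n)%nat -> - d <= block_seq n.
Proof.
  intros Hd. destruct (INR_unbounded (/ d)) as [K HK]. exists (K * K)%nat. intros n Hn.
  pose proof (block_pos_inv n) as Hinv. unfold block_seq. destruct (block_pos n) as [k j].
  destruct Hinv as [Hk [_ Hnk]]. destruct (Nat.eqb j 0); [lra |].
  assert (HKk : INR K <= INR k) by (apply le_INR; nia).
  assert (INR k > 0) by (apply lt_0_INR; lia).
  pose proof (Rinv_l d ltac:(lra)). pose proof (Rinv_r (INR k) ltac:(lra)).
  assert (0 < / INR k) by (apply Rinv_0_lt_compat; lra). nra.
Qed.

Lemma exists_btri_diff_not_sum_ge0 {X : Type} :
  countably_infinite X -> exists E : X -> R, btri_diff E /\ ~ sum_ge0 E.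
Proof.
  intros [e He]. pose proof He as [g [Hge Heg]].
  exists (fun x => block_seq (g x)).
  assert (Hpsum : forall n, psum (fun x => block_seq (g x)) e n = sum_f_R0 block_seq n).
  { intros n. unfold psum. apply sum_eq. intros i _. rewrite Hge. reflexivity. }
  assert (HNS : ~ sum_ge0 (fun x => block_seq (g x))).
  { intros [[r [_ Hconv]] | Hdiv].
    - destruct (Hconv e He (1 / 2)) as [N HN]; [lra |].
      destruct (block_seq_one_often (S N)) as [[| n] [Hn H1]]; [lia |].
      pose proof (HN (S n) ltac:(lia)) as A1. pose proof (HN n ltac:(lia)) as A2.
      rewrite Hpsum in A1, A2. simpl sum_f_R0 in A1. rewrite H1 in A1. unfold Rdist in *.
      apply Rabs_def2 in A1. apply Rabs_def2 in A2. lra.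
    - destruct (Hdiv e He 1) as [N HN]. specialize (HN N (le_n N)). rewrite Hpsum in HN.
      pose proof (block_sum_le_1 N). lra. }
  split; [right; split; [exact HNS | split] | exact HNS].
  - exists (1 / 2). split; [lra |]. exists (fun x => block_seq (g x) > 1 / 2). split; auto.
    apply (infinite_set_iff_unbounded e _ He). intros m.
    destruct (block_seq_one_often m) as [n [Hn H1]]. exists n. split; auto. rewrite Hge, H1. lra.
  - intros [d [Hd [B [HB HBd]]]]. destruct (block_seq_eventually_ge d Hd) as [N HN].
    destruct (proj1 (infinite_set_iff_unbounded e B He) HB N) as [n [Hn HBn]].
    specialize (HBd _ HBn). rewrite Hge in HBd. specialize (HN n Hn). lra.
Qed.

Theorem proposition3 (X : Type) (HX : countably_infinite X) :
  (is_preorder (@btri X) /\ strong_pareto (@btri X) /\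
   permutation_invariance (@btri X) /\ quasi_independence (@btri X)) /\
  (weakly_extends (@btri X) (@sum_preorder X) /\
   exists w v : world X, btri w v /\ ~ sum_preorder w v).
Proof.
  assert (Hrefl : forall w : world X, btri w w).
  { intros w. apply btriE. left. apply sum_ge0_nonneg; auto. intros x. lra. }
  split; [split; [split | split; [| split]] | split].
  - exact Hrefl.
  - intros w v u Hwv Hvu. apply btriE in Hwv, Hvu. apply btriE.
    replace (fun x => w x - u x) with (fun x => (w x - v x) + (v x - u x))
      by (apply functional_extensionality; intros; ring).
    apply btri_diff_add; auto.
  - intros w v Hge [x0 Hx0]. split.
    + apply btriE. left. apply sum_ge0_nonneg; auto. intros x. specialize (Hge x). lra.
    + rewrite btriE. apply (not_btri_diff_nonpos _ x0 HX); [intros x; specialize (Hge x) |]; lra.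
  - intros w v p Hp. destruct (bijection_inv p Hp) as [g [Hg [_ Hpg]]].
    rewrite !btriE. split; intros H; [exact (btri_diff_perm _ p Hp H) |].
    apply (btri_diff_perm _ g Hg) in H. unfold permute in H.
    replace (fun x => w x - v x) with (fun x => w (p (g x)) - v (p (g x))); auto.
    apply functional_extensionality. intros x. rewrite Hpg. reflexivity.
  - intros w v u H alpha [Ha0 Ha1]. destruct (Rle_lt_or_eq_dec 0 alpha Ha0) as [Hpos | <-].
    + apply btriE in H. apply btriE.
      replace (fun x => mix alpha w u x - mix alpha v u x) with (fun x => alpha * (w x - v x))
        by (apply functional_extensionality; intros; unfold mix; ring).
      apply btri_diff_scale; auto.
    + replace (mix 0 v u) with (mix 0 w u); [apply Hrefl |].
      apply functional_extensionality. intros x. unfold mix. ring.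
  - intros w v H. apply btriE. left. exact H.
  - destruct (exists_btri_diff_not_sum_ge0 HX) as [E [HE HNE]]. exists E, (fun _ => 0).
    assert (HE0 : (fun x => E x - 0) = E) by (apply functional_extensionality; intros; ring).
    split.
    + apply btriE. cbv beta. rewrite HE0. exact HE.
    + change (~ sum_ge0 (fun x => E x - 0)). rewrite HE0. exact HNE.
Qed.
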